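(* Let $\mathcal{P}\subseteq[0,1]^n$ be a polytope with $\mathcal{P}\cap(0,1)^n\neq\emptyset$. If the interior of $\mathcal{P}$ is the unique open face of $\mathcal{P}$ contained in $(0,1)^n$, then $\mathcal{P}=[0,1]^n\cap\mathcal{H}$ for some affine subspace $\mathcal{H}\subseteq\mathbb{R}^n$.
   Context: A face of $\mathcal{P}$ is a set of the form $F=\arg\max_{p\in\mathcal{P}}w^Tp$ for some $w\in\mathbb{R}^n$ (taking $w=0$ gives $\mathcal{P}$ itself); its dimension is that of its affine span. The open face $\tilde F$ corresponding to a face $F$ is the set of points of $F$ that belong to no face of $\mathcal{P}$ of lower dimension. The interior of $\mathcal{P}$ means the open face corresponding to the face $\mathcal{P}$ itself (its relative interior). *)

From HB Require Import structures.
From mathcomp Require Import all_boot all_order all_algebra.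
From mathcomp Require Import reals.
Set Implicit Arguments. Unset Strict Implicit. Unset Printing Implicit Defensive.
Import Order.TTheory GRing.Theory Num.Theory.
Local Open Scope ring_scope.

Section Defs.
Variables (R : realType) (n : nat).
Notation pt := 'rV[R]_n.

Definition dotp (w p : pt) : R := \sum_(i < n) w 0 i * p 0 i.

Definition conv (V : seq pt) (x : pt) : Prop :=
  exists lam : 'I_(size V) -> R,
    (forall i, 0 <= lam i) /\ \sum_i lam i = 1 /\
    x = \sum_i lam i *: V`_i.

Definition polytope (P : pt -> Prop) : Prop :=
  exists V : seq pt, forall x, P x <-> conv V x.

Definition cube01 (x : pt) : Prop := forall i, 0 <= x 0 i <= 1.
Definition open_cube01 (x : pt) : Prop := forall i, 0 < x 0 i < 1.

(* F = argmax_{p in P} w^T p for some w (w = 0 gives P itself) *)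
Definition is_face (P F : pt -> Prop) : Prop :=
  exists w : pt, forall x, F x <-> (P x /\ forall q, P q -> dotp w q <= dotp w x).

(* affine rank of a finite list of points = (dimension of its affine span) + 1,
   and 0 for the empty list *)
Definition affrank (s : seq pt) : nat :=
  if s is x0 :: r then (\rank (\matrix_(i < size r, j < n) (r`_i - x0) 0 j)).+1 else 0.

(* dim (aff span G) < dim (aff span F) (dimensions shifted by one, so that the
   empty set has "dimension -1") *)
Definition lower_dim (G F : pt -> Prop) : Prop :=
  exists k : nat,
    (forall s : seq pt, (forall x, x \in s -> G x) -> (affrank s <= k)%N) /\
    (exists s : seq pt, (forall x, x \in s -> F x) /\ (k < affrank s)%N).

Definition open_face (P F : pt -> Prop) (x : pt) : Prop :=
  F x /\ ~ (exists G, is_face P G /\ lower_dim G F /\ G x).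

(* the interior (relative interior) of P *)
Definition interiorP (P : pt -> Prop) : pt -> Prop := open_face P P.

End Defs.

From HB Require Import structures.
From mathcomp Require Import all_boot all_order all_algebra.
From mathcomp Require Import reals boolp classical_sets functions.
From mathcomp Require Import topology normedtype derive.
From mathcomp Require Import ring lra.
Import Order.TTheory GRing.Theory Num.Theory.
Import numFieldNormedType.Exports.
Local Open Scope ring_scope.

(* If a linear form w attains its maximum over P at a point z of the open cube, then z lies
   in the open face of some face G of P. That open face avoids the facets of the cube (they
   are supporting hyperplanes of P not containing z), so by uniqueness it is the interior
   of P; as the interior meets no proper face, argmax w is all of P: w is constant on P.
   Now let x0 be a point of P in the open cube and x a point of the cube in the affine hull
   of P, and walk from x0 to x. Near a point of P in the open cube, a point y of the hull
   outside P would have its nearest point p in P in the open cube; then y - p is maximized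
   over P at p, hence constant on P and on its affine hull, forcing y = p. So the walk
   never leaves P, and x is in P since P is closed. *)

Lemma continuous_sum (R : numFieldType) (T : topologicalType) (I : Type)
    (r : seq I) (P : pred I) (F : I -> T -> R) :
  (forall i, continuous (F i)) -> continuous (fun x => \sum_(i <- r | P i) F i x).
Proof.
move=> Fc; rewrite -fct_sumE.
apply: (@big_ind (T -> R) (fun f => continuous f)) => //.
- exact: cst_continuous.
- by move=> f g fc gc x; apply: continuousD; [exact: fc | exact: gc].
Qed.

Section DotProduct.
Context {R : realType} {n : nat}.
Implicit Types (w p q v : 'rV[R]_n).

Lemma dotpC w p : dotp w p = dotp p w.
Proof. by apply: eq_bigr => i _; rewrite mulrC. Qed.

Lemma dotpDr w p q : dotp w (p + q) = dotp w p + dotp w q.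
Proof. by rewrite /dotp -big_split; apply: eq_bigr => i _; rewrite mxE mulrDr. Qed.

Lemma dotpBr w p q : dotp w (p - q) = dotp w p - dotp w q.
Proof. by rewrite /dotp -sumrB; apply: eq_bigr => i _; rewrite !mxE mulrBr. Qed.

Lemma dotpZr w a p : dotp w (a *: p) = a * dotp w p.
Proof. by rewrite /dotp mulr_sumr; apply: eq_bigr => i _; rewrite mxE mulrCA. Qed.

Lemma dotpDl w p q : dotp (p + q) w = dotp p w + dotp q w.
Proof. by rewrite dotpC dotpDr !(dotpC w). Qed.

Lemma dotpBl w p q : dotp (p - q) w = dotp p w - dotp q w.
Proof. by rewrite dotpC dotpBr !(dotpC w). Qed.

Lemma dotpZl w a p : dotp (a *: p) w = a * dotp p w.
Proof. by rewrite dotpC dotpZr dotpC. Qed.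

Lemma dotpNl w p : dotp (- p) w = - dotp p w.
Proof. by rewrite -scaleN1r dotpZl mulN1r. Qed.

Lemma dotp0l w : dotp 0 w = 0.
Proof. by rewrite /dotp big1 // => i _; rewrite mxE mul0r. Qed.

Lemma dotp_sumr w (I : Type) (r : seq I) (P : pred I) (F : I -> 'rV[R]_n) :
  dotp w (\sum_(i <- r | P i) F i) = \sum_(i <- r | P i) dotp w (F i).
Proof.
by apply: (big_morph (dotp w) (dotpDr w)); rewrite dotpC dotp0l.
Qed.

Lemma dotp_mulmx w p : dotp w p = (p *m w^T) 0 0.
Proof. by rewrite mxE; apply: eq_bigr => i _; rewrite mxE mulrC. Qed.

Lemma dotp_delta i q : dotp (delta_mx 0 i) q = q 0 i.
Proof.
rewrite /dotp (bigD1 i) //= mxE !eqxx mul1r big1 ?addr0 // => j /negPf ji.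
by rewrite mxE ji andbF mul0r.
Qed.

Lemma dotppZ a v : dotp (a *: v) (a *: v) = a ^+ 2 * dotp v v.
Proof. by rewrite dotpZl dotpZr mulrA expr2. Qed.

Lemma dotppN v : dotp (- v) (- v) = dotp v v.
Proof. by rewrite -scaleN1r dotppZ sqrrN expr1n mul1r. Qed.

Lemma dotppBZ a p v :
  dotp (p - a *: v) (p - a *: v) = dotp p p - 2 * a * dotp p v + a ^+ 2 * dotp v v.
Proof. by rewrite dotpBl !dotpBr dotppZ !dotpZl !dotpZr (dotpC v p); ring. Qed.

Lemma sqr_coord_le_dotpp v i : v 0 i ^+ 2 <= dotp v v.
Proof.
by rewrite /dotp (bigD1 i) //= -expr2 lerDl; apply: sumr_ge0 => j _; rewrite -expr2 sqr_ge0.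
Qed.

Lemma dotpp_ge0 v : 0 <= dotp v v.
Proof. by apply: sumr_ge0 => i _; rewrite -expr2 sqr_ge0. Qed.

Lemma dotpp_eq0 v : dotp v v = 0 -> v = 0.
Proof.
move=> /eqP; rewrite psumr_eq0 => [/allP v0|i _]; last by rewrite -expr2 sqr_ge0.
apply/rowP => j; rewrite mxE.
by have /= := v0 j (mem_index_enum j); rewrite mulf_eq0 orbb => /eqP.
Qed.

Lemma dotppD_le p q : dotp (p + q) (p + q) <= 2 * dotp p p + 2 * dotp q q.
Proof.
have := dotpp_ge0 (p - q).
rewrite !dotpBl !dotpBr !dotpDl !dotpDr (dotpC q p); lra.
Qed.

End DotProduct.

Section ConvexHull.
Context {R : realType} {n : nat}.
Implicit Types (V : seq 'rV[R]_n) (x y p q : 'rV[R]_n).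

Lemma conv_nth V i : (i < size V)%N -> conv V V`_i.
Proof.
move=> iV; pose i0 : 'I_(size V) := Ordinal iV.
exists (fun j => (j == i0)%:R); split; first by move=> j; case: (j == i0).
split; first by rewrite (bigD1 i0) //= eqxx big1 ?addr0 // => j /negPf ->.
rewrite (bigD1 i0) //= eqxx scale1r big1 ?addr0 // => j /negPf ->.
by rewrite scale0r.
Qed.

Lemma conv_convex V p q a : conv V p -> conv V q -> 0 <= a <= 1 ->
  conv V ((1 - a) *: p + a *: q).
Proof.
move=> [lp [lp0 [lp1 ->]]] [lq [lq0 [lq1 ->]]] /andP[a0 a1].
exists (fun i => (1 - a) * lp i + a * lq i); split.
  by move=> i; apply: addr_ge0; apply: mulr_ge0 => //; rewrite subr_ge0.
split; first by rewrite big_split /= -!mulr_sumr lp1 lq1; lra.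
rewrite !scaler_sumr -big_split /=; apply: eq_bigr => i _.
by rewrite !scalerA -scalerDl.
Qed.

Lemma conv_sub_span V x0 x :
  conv V x -> x - x0 \in <<[seq v - x0 | v <- V]>>%VS.
Proof.
move=> [lam [_ [lam1 ->]]].
have -> : \sum_i lam i *: V`_i - x0 = \sum_i lam i *: (V`_i - x0).
  by rewrite (eq_bigr _ (fun i _ => scalerBr _ _ _)) sumrB -scaler_suml lam1 scale1r.
apply: memv_suml => i _; apply/memvZ/memv_span.
by apply: map_f; exact: mem_nth.
Qed.

Lemma span_dotp_const V x0 y w :
  (forall i, (i < size V)%N -> dotp w V`_i = dotp w x0) ->
  y - x0 \in <<[seq v - x0 | v <- V]>>%VS -> dotp w y = dotp w x0.
Proof.
move=> wV /(@coord_span _ _ _ (in_tuple _)) /(congr1 (dotp w)).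
rewrite dotp_sumr dotpBr big1 => [/eqP|i _]; first by rewrite subr_eq0 => /eqP.
have iV : (i < size V)%N by case: i => i /=; rewrite size_map.
by rewrite dotpZr (nth_map 0) // dotpBr wV // subrr mulr0.
Qed.

Lemma nearest_max (P : 'rV[R]_n -> Prop) y p :
  (forall p q a, P p -> P q -> 0 <= a <= 1 -> P ((1 - a) *: p + a *: q)) ->
  P p -> (forall q, P q -> dotp (y - p) (y - p) <= dotp (y - q) (y - q)) ->
  forall q, P q -> dotp (y - p) q <= dotp (y - p) p.
Proof.
move=> Pconvex Pp pmin q Pq.
set d := y - p; set N := dotp (q - p) (q - p); set g := dotp d (q - p).
rewrite -subr_le0 -dotpBr -/g; case: (lerP g 0) => // g0.
have N0 : 0 <= N := dotpp_ge0 _.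
(* p + a (q - p) lies in P and is strictly closer to y than p *)
pose a := g / (N + g).
have aNg : a * (N + g) = g by rewrite /a divfK // gt_eqF //; lra.
have a0 : 0 < a by apply: divr_gt0 => //; lra.
have a1 : a <= 1 by rewrite /a ler_pdivrMr; lra.
have := pmin _ (Pconvex p q a Pp Pq (introT andP (conj (ltW a0) a1))).
have -> : y - ((1 - a) *: p + a *: q) = d - a *: (q - p).
  by apply/rowP => j; rewrite /d !mxE; ring.
rewrite dotppBZ -/g -/N; nra.
Qed.

Lemma simplex_compact m :
  compact ([set l : 'rV[R]_m | forall i, `[0, 1]%classic (l ord0 i)] `&`
           [set l | \sum_i l 0 i = 1])%classic.
Proof.
apply: compact_closedI.
  by apply: (@rV_compact R m (fun=> `[0, 1]%classic)) => _; exact: segment_compact.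
apply: (@preimage_closed _ _ (fun l : 'rV[R]_m => \sum_i l 0 i) [set 1]%classic);
  last exact: closed_eq.
by move=> l _; apply: continuous_sum => i; exact: coord_continuous.
Qed.

Lemma conv_nearest V z y : conv V z ->
  exists2 p, conv V p & forall q, conv V q -> dotp (y - p) (y - p) <= dotp (y - q) (y - q).
Proof.
move=> Vz; set m := size V.
pose comb (l : 'rV[R]_m) : 'rV[R]_n := \sum_i l 0 i *: V`_i.
pose S := ([set l : 'rV[R]_m | forall i, `[0, 1]%classic (l ord0 i)] `&`
          [set l | \sum_i l 0 i = 1])%classic.
have combS q : conv V q -> exists2 l, S l & comb l = q.
  move=> [lam [lam0 [lam1 ->]]]; exists (\row_i lam i); last first.
    by apply: eq_bigr => i _; rewrite mxE.
  split; last by rewrite -lam1; apply: eq_bigr => i _; rewrite mxE.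
  move=> i /=; rewrite mxE in_itv /= lam0 -lam1 (bigD1 i) //= lerDl.
  exact: sumr_ge0.
have S_compact : compact S := simplex_compact m.
have coord_cont j : continuous (fun l => (y - comb l) 0 j).
  have -> : (fun l => (y - comb l) 0 j) = fun l => y 0 j - \sum_i l 0 i * V`_i 0 j.
    apply: funext => l; rewrite !mxE summxE; congr (_ - _).
    by apply: eq_bigr => i _; rewrite mxE.
  move=> l; apply: continuousB; first exact: cst_continuous.
  apply: continuous_sum => i {}l.
  by apply: continuousM; [exact: coord_continuous | exact: cst_continuous].
have dist_cont : continuous (fun l => dotp (y - comb l) (y - comb l)).
  by apply: continuous_sum => j l; apply: continuousM; apply: coord_cont.
have [l0 S_l0 _] := combS z Vz.
have [c /set_mem S_c cmin] :=
  compact_EVT_min (ex_intro _ l0 S_l0) S_compact (continuous_subspaceT dist_cont).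
exists (comb c).
  exists (fun i => c 0 i); split; last by case: S_c.
  by move=> i; have [/(_ i) /= + _] := S_c; rewrite in_itv /= => /andP[].
by move=> q /combS [l S_l <-]; apply: cmin; rewrite inE.
Qed.

End ConvexHull.

Section AffineRank.
Context {R : realType} {n : nat}.
Implicit Types (s : seq 'rV[R]_n) (G B : 'rV[R]_n -> Prop).

Lemma affrank_le s : (affrank s <= n.+1)%N.
Proof. by case: s => //= x0 r; rewrite ltnS rank_leq_col. Qed.

Lemma affrank_rcons_lt u c s b :
  (forall q, q \in s -> dotp u q = c) -> dotp u b != c ->
  (affrank s < affrank (rcons s b))%N.
Proof.
case: s => [|x0 r] //= on_hyp bc; rewrite ltnS.
have x0c : dotp u x0 = c by apply: on_hyp; rewrite mem_head.
set M := \matrix_(i < size r, j < n) (r`_i - x0) 0 j.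
set M' := \matrix_(i < size (rcons r b), j < n) ((rcons r b)`_i - x0) 0 j.
have MM' : (M <= M')%MS.
  apply/row_subP => i; have ir : (i < size (rcons r b))%N by rewrite size_rcons ltnS ltnW.
  have -> : row i M = row (Ordinal ir) M'.
    by apply/rowP => j; rewrite !mxE /= nth_rcons ltn_ord.
  exact: row_sub.
have bM' : (b - x0 <= M')%MS.
  have br : (size r < size (rcons r b))%N by rewrite size_rcons.
  have -> : b - x0 = row (Ordinal br) M'.
    by apply/rowP => j; rewrite !mxE /= nth_rcons ltnn eqxx.
  exact: row_sub.
(* u is orthogonal to the rows of M but not to b - x0 *)
have Mu : M *m u^T = 0.
  apply/matrixP => i k; rewrite ord1 !mxE.
  have ri : r`_i \in x0 :: r by rewrite in_cons mem_nth ?orbT.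
  rewrite -[RHS](subrr c) -{1}(on_hyp _ ri) -x0c -dotpBr /dotp.
  by apply: eq_bigr => j _; rewrite !mxE mulrC.
have bM : ~~ (b - x0 <= M)%MS.
  apply/negP => /submxP[D bE]; move: bc.
  by rewrite -x0c -subr_eq0 -dotpBr dotp_mulmx bE -mulmxA Mu mulmx0 mxE eqxx.
apply: rank_ltmx; rewrite ltmxE MM' /=.
by apply: contra bM => M'M; exact: submx_trans bM' M'M.
Qed.

Lemma affrank_max G : exists2 s, (forall x, x \in s -> G x) &
  forall s', (forall x, x \in s' -> G x) -> (affrank s' <= affrank s)%N.
Proof.
pose attained k := `[< exists2 s, (forall x, x \in s -> G x) & affrank s = k >].
have att0 : exists k, attained k by exists 0%N; apply/asboolP; exists [::].
have att_le k : attained k -> (k <= n.+1)%N by move=> /asboolP[s _ <-]; exact: affrank_le.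
case: (ex_maxnP att0 att_le) => _ /asboolP[s sG <-] smax.
by exists s => // s' s'G; apply: smax; apply/asboolP; exists s'.
Qed.

Lemma lower_dim_hyperplane G B u c b :
  (forall q, G q -> B q) -> (forall q, G q -> dotp u q = c) ->
  B b -> dotp u b != c -> lower_dim G B.
Proof.
move=> GB Gc Bb bc; have [s sG smax] := affrank_max G.
exists (affrank s); split => //; exists (rcons s b); split.
  by move=> x; rewrite mem_rcons in_cons => /orP[/eqP -> // | /sG /GB].
by apply: (@affrank_rcons_lt u c) => // q /sG /Gc.
Qed.

End AffineRank.

Section Faces.
Context {R : realType} {n : nat} (P : 'rV[R]_n -> Prop).
Implicit Types (w v x z : 'rV[R]_n) (G : 'rV[R]_n -> Prop).

Definition argmax w x := P x /\ forall q, P q -> dotp w q <= dotp w x.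

Lemma argmax_face w : is_face P (argmax w).
Proof. by exists w. Qed.

Lemma face_self : is_face P P.
Proof. by exists 0 => x; split=> [Px | []//]; split=> // q _; rewrite !dotp0l. Qed.

Lemma exists_open_face z : P z -> exists2 G, is_face P G & open_face P G z.
Proof.
move=> Pz.
suff: forall k G, is_face P G -> G z ->
    (forall s, (forall x, x \in s -> G x) -> (affrank s <= k)%N) ->
    exists2 G', is_face P G' & open_face P G' z.
  by apply; [exact: face_self | done | move=> s _; exact: affrank_le].
elim/ltn_ind => k IH G faceG Gz Gk.
have [[G' [faceG' [[k' [G'k' [s [sG k's]]]] G'z]]] | no_lower] :=
  pselect (exists G', is_face P G' /\ lower_dim G' G /\ G' z).
  exact: (IH k' (leq_trans k's (Gk s sG)) G' faceG' G'z G'k').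
by exists G.
Qed.

Lemma argmaxD w v c x : (forall q, P q -> dotp v q <= c) ->
  argmax w x -> dotp v x = c ->
  forall q, argmax (w + v) q <-> argmax w q /\ dotp v q = c.
Proof.
move=> vc [Px xmax] vx q; split.
  move=> [Pq qmax]; have := qmax x Px; rewrite !dotpDl vx.
  have := xmax q Pq; have := vc q Pq => vq wq wvq.
  split; last lra.
  by split=> // q' Pq'; have := xmax q' Pq'; lra.
move=> [[Pq qmax] vq]; split=> // q' Pq'.
by rewrite !dotpDl vq; have := qmax q' Pq'; have := vc q' Pq'; lra.
Qed.

(* Otherwise G meets {v = c} in a lower-dimensional face of P containing x. *)
Lemma open_face_avoid G v c z x : is_face P G ->
  (forall q, P q -> dotp v q <= c) -> G z -> dotp v z != c ->
  open_face P G x -> dotp v x != c.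
Proof.
move=> [w Gw] vc Gz vz [Gx not_lower]; apply/eqP => vx.
have cap := @argmaxD w v c x vc ((Gw x).1 Gx) vx.
apply: not_lower; exists (argmax (w + v)); split; first exact: argmax_face.
split; last by apply/cap; split=> //; exact/Gw.
apply: (@lower_dim_hyperplane _ _ _ _ v c z) => // q /cap[] //.
by move/Gw.
Qed.

Hypothesis P_cube : forall x, P x -> cube01 x.

Lemma open_face_open_cube G z x : is_face P G -> G z -> open_cube01 z ->
  open_face P G x -> open_cube01 x.
Proof.
move=> faceG Gz oz xG i.
have Px : P x by case: faceG xG => w Gw [/Gw[]].
have /andP[xi0 xi1] := P_cube _ Px i; have /andP[zi0 zi1] := oz i.
have avoid v c : (forall q, P q -> dotp v q <= c) -> dotp v z != c -> dotp v x != c.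
  by move=> vc vz; exact: open_face_avoid _ _ faceG vc Gz vz xG.
have : dotp (- delta_mx 0 i) x != 0.
  apply: avoid => [q /P_cube /(_ i) /andP[qi0 _] |]; rewrite dotpNl dotp_delta.
    by rewrite oppr_le0.
  by rewrite oppr_eq0 gt_eqF.
have : dotp (delta_mx 0 i) x != 1.
  apply: avoid => [q /P_cube /(_ i) /andP[_ qi1] |]; rewrite dotp_delta //.
  by rewrite lt_eqF.
rewrite dotpNl !dotp_delta oppr_eq0 => x1 x0.
by rewrite !lt_neqAle xi0 xi1 eq_sym x0 x1.
Qed.

Hypothesis interior_unique : forall F, is_face P F ->
  (forall x, open_face P F x -> open_cube01 x) ->
  forall x, open_face P F x <-> interiorP P x.

Lemma argmax_open_cube_const z w : P z -> open_cube01 z ->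
  (forall q, P q -> dotp w q <= dotp w z) -> forall q, P q -> dotp w q = dotp w z.
Proof.
move=> Pz oz zmax q Pq; apply: contrapT => /eqP wq.
have [G faceG zG] := exists_open_face _ Pz.
have Gz : G z by case: zG.
have [_ no_lower] :=
  (interior_unique _ faceG (fun x => open_face_open_cube _ _ _ faceG Gz oz) z).1 zG.
apply: no_lower; exists (argmax w); split; first exact: argmax_face.
split; last by split.
apply: (@lower_dim_hyperplane _ _ _ _ w (dotp w z) q) => //; first by move=> ? [].
by move=> q' [Pq' q'max]; apply/eqP; rewrite eq_le q'max // zmax.
Qed.

End Faces.

Lemma open_cube_margin {R : realType} {n : nat} (x : 'rV[R]_n) : open_cube01 x ->
  exists2 d, 0 < d & forall i, d <= x 0 i <= 1 - d.
Proof.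
move=> ox; exists (\big[Order.min/1]_i Order.min (x 0 i) (1 - x 0 i)).
  apply/bigmin_gtP; split=> // i _; have /andP[xi0 xi1] := ox i.
  by rewrite lt_min xi0 subr_gt0.
move=> i; have := bigmin_le 1 i (fun i => Order.min (x 0 i) (1 - x 0 i)).
by rewrite le_min => /andP[? ?]; apply/andP; split; lra.
Qed.

Lemma open_cube_near {R : realType} {n : nat} (z p : 'rV[R]_n) d : 0 <= d ->
  (forall i, d <= z 0 i <= 1 - d) -> dotp (p - z) (p - z) < d ^+ 2 -> open_cube01 p.
Proof.
move=> d0 zd pz i; have /andP[zi0 zi1] := zd i.
have := le_lt_trans (sqr_coord_le_dotpp (p - z) i) pz; rewrite !mxE => near.
by apply/andP; split; nra.
Qed.

Lemma relative_steps_near1 {R : realType} (T : set R) c : 0 < c -> T 0 ->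
  (forall t, T t -> t <= 1) ->
  (forall t s, T t -> t <= s <= 1 -> s - t < c * (1 - t) -> T s) ->
  forall e, 0 < e -> exists2 t, T t & 1 - e < t.
Proof.
move=> c0 T0 T1 step e e0.
have supT : has_sup T by split; [exists 0 | exists 1 => t /T1].
have ub t : T t -> t <= sup T by exact: sup_upper_bound.
suff sup1 : 1 <= sup T.
  by have [t Tt] := sup_adherent e0 supT; exists t => //; lra.
rewrite leNgt; apply/negP => sup_lt1.
pose e' := (1 - sup T) * c / (c + 2).
have e'E : e' * (c + 2) = (1 - sup T) * c by rewrite /e' divfK // gt_eqF //; lra.
have e'0 : 0 < e' by apply: divr_gt0; [apply: mulr_gt0 | ]; lra.
have [t Tt te'] := sup_adherent e'0 supT.
have := ub t Tt => tsup.
have : T (sup T + e') by apply: (step t) => //; [apply/andP; split | ]; nra.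
by move/ub; lra.
Qed.

(* The intersection of the hyperplanes containing P, i.e. the affine hull of P when P is
   nonempty. *)
Definition affine_hull {R : realType} {n : nat} (P : 'rV[R]_n -> Prop) (y : 'rV[R]_n) :=
  forall w c, (forall q, P q -> dotp w q = c) -> dotp w y = c.

Section Saturation.
Context {R : realType} {n : nat} (P : 'rV[R]_n -> Prop).
Hypothesis P_convex : forall p q a, P p -> P q -> 0 <= a <= 1 -> P ((1 - a) *: p + a *: q).
Hypothesis P_nearest : forall y, exists2 p, P p &
  forall q, P q -> dotp (y - p) (y - p) <= dotp (y - q) (y - q).
Hypothesis P_flat : forall z w, P z -> open_cube01 z ->
  (forall q, P q -> dotp w q <= dotp w z) -> forall q, P q -> dotp w q = dotp w z.

Lemma mem_of_near z y : P z -> affine_hull P y ->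
  (forall p, dotp (p - z) (p - z) <= 4 * dotp (y - z) (y - z) -> open_cube01 p) -> P y.
Proof.
move=> Pz hull_y near_open.
have [p Pp pmin] := P_nearest y.
have p_open : open_cube01 p.
  apply: near_open; have := dotppD_le (p - y) (y - z); rewrite addrA subrK.
  by rewrite -[p - y]opprB dotppN; have := pmin z Pz; lra.
have := hull_y _ _ (P_flat _ _ Pp p_open (nearest_max _ _ _ P_convex Pp pmin)).
move=> /eqP; rewrite -subr_eq0 -dotpBr => /eqP /dotpp_eq0 /eqP.
by rewrite subr_eq0 => /eqP ->.
Qed.

Section Segment.
Variables (x0 x : 'rV[R]_n).
Local Notation y t := ((1 - t) *: x0 + t *: x).
Local Notation D := (dotp (x - x0) (x - x0)).

Lemma segment_sub s t : y s - y t = (s - t) *: (x - x0).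
Proof. by apply/rowP => j; rewrite !mxE; ring. Qed.

Lemma segment_margin d t i : (forall i, d <= x0 0 i <= 1 - d) -> cube01 x ->
  0 <= t <= 1 -> (1 - t) * d <= y t 0 i <= 1 - (1 - t) * d.
Proof.
move=> x0d cx /andP[t0 t1]; have /andP[? ?] := x0d i; have /andP[? ?] := cx i.
by rewrite !mxE; apply/andP; split; nra.
Qed.

Hypotheses (Px0 : P x0) (hull_x : affine_hull P x).

Lemma segment_hull t : affine_hull P (y t).
Proof. by move=> w c wc; rewrite dotpDr !dotpZr (wc _ Px0) (hull_x _ _ wc); ring. Qed.

(* Such a step moves by less than half the margin (1 - t) d of y t in the cube. *)
Lemma segment_step d t s : 0 < d -> (forall i, d <= x0 0 i <= 1 - d) -> cube01 x ->
  0 <= t <= 1 -> P (y t) -> t <= s -> s - t < d / (2 * (D + 1)) * (1 - t) -> P (y s).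
Proof.
move=> d0 x0d cx t01 Pyt ts st.
apply: (mem_of_near _ _ Pyt (segment_hull s)) => p; rewrite segment_sub dotppZ => near.
apply: (open_cube_near _ _ _ _ (fun i => segment_margin _ _ i x0d cx t01)).
  by move: t01 => /andP[_ t1]; apply: mulr_ge0; lra.
have D1 : 0 < D + 1 by have := dotpp_ge0 (x - x0); lra.
set a := d / (2 * (D + 1)) * (1 - t) in st.
have a_margin : (1 - t) * d = 2 * (D + 1) * a by rewrite /a; field; rewrite gt_eqF.
have st2 : (s - t) ^+ 2 * D <= a ^+ 2 * D.
  by apply: ler_wpM2r; rewrite ?dotpp_ge0 // !expr2; nra.
have aD : a ^+ 2 * D < a ^+ 2 * (D + 1) ^+ 2.
  by rewrite ltr_pM2l ?exprn_gt0 //; [nra | lra].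
rewrite a_margin exprMn; lra.
Qed.

Lemma segment_end : (forall e, 0 < e -> exists2 t, P (y t) & 1 - e < t <= 1) -> P x.
Proof.
move=> near_end; apply: contrapT => not_Px.
have [p Pp pmin] := P_nearest x.
set N := dotp (x - p) (x - p).
have N0 : 0 < N.
  rewrite lt_def dotpp_ge0 andbT; apply: contra_notN not_Px => /eqP /dotpp_eq0 /eqP.
  by rewrite subr_eq0 => /eqP ->.
have D0 := dotpp_ge0 (x - x0).
set e := N / (N + D + 1).
have eE : e * (N + D + 1) = N by rewrite /e divfK // gt_eqF //; lra.
have e0 : 0 < e by apply: divr_gt0; lra.
have [t Pyt /andP[te t1]] := near_end e e0.
have := pmin _ Pyt; rewrite -/N.
have -> : x - y t = (1 - t) *: (x - x0) by apply/rowP => j; rewrite !mxE; ring.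
rewrite dotppZ.
have e1 : e < 1 by nra.
have : (1 - t) ^+ 2 * D <= e * D by apply: ler_wpM2r => //; rewrite expr2; nra.
have : 0 < e * N by apply: mulr_gt0.
lra.
Qed.

End Segment.

Lemma affine_hull_cube_mem x0 x : P x0 -> open_cube01 x0 -> cube01 x ->
  affine_hull P x -> P x.
Proof.
move=> Px0 ox0 cx hull_x; have [d d0 x0d] := open_cube_margin _ ox0.
apply: (segment_end x0) => e e0.
pose T t := 0 <= t <= 1 /\ P ((1 - t) *: x0 + t *: x).
have [t [/andP[_ t1] Pyt] te] : exists2 t, T t & 1 - e < t.
  apply: (@relative_steps_near1 R T (d / (2 * (dotp (x - x0) (x - x0) + 1)))) => //.
  - by apply: divr_gt0; [| apply: mulr_gt0; have := dotpp_ge0 (x - x0)]; lra.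
  - by split; [rewrite lexx ler01 | rewrite subr0 scale1r scale0r addr0].
  - by move=> t [/andP[]].
  - move=> t s [t01 Pyt] /andP[ts s1] st; split; last exact: segment_step st.
    by move: t01 => /andP[t0 _]; apply/andP; split; lra.
by exists t => //; rewrite te t1.
Qed.

End Saturation.

Theorem lemmaB6 (R : realType) (n : nat) (P : 'rV[R]_n -> Prop) :
  polytope P ->
  (forall x, P x -> cube01 x) ->
  (exists x, P x /\ open_cube01 x) ->
  (* the interior of P is an open face contained in (0,1)^n ... *)
  (forall x, interiorP P x -> open_cube01 x) ->
  (* ... and it is the only one *)
  (forall F, is_face P F ->
     (forall x, open_face P F x -> open_cube01 x) ->
     forall x, open_face P F x <-> interiorP P x) ->
  exists (x0 : 'rV[R]_n) (U : {vspace 'rV[R]_n}),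
    forall x, P x <-> (cube01 x /\ x - x0 \in U).
Proof.
move=> [V PV] P_cube [x0 [Px0 ox0]] _ interior_unique.
have P_convex p q a : P p -> P q -> 0 <= a <= 1 -> P ((1 - a) *: p + a *: q).
  by move=> /PV Vp /PV Vq a01; apply/PV; exact: conv_convex.
have P_nearest y : exists2 p, P p &
    forall q, P q -> dotp (y - p) (y - p) <= dotp (y - q) (y - q).
  have [p /PV Pp pmin] := conv_nearest _ _ y ((PV x0).1 Px0).
  by exists p => // q /PV; exact: pmin.
have P_flat := argmax_open_cube_const _ P_cube interior_unique.
exists x0, <<[seq v - x0 | v <- V]>>%VS => x; split.
  by move=> Px; split; [exact: P_cube | apply: conv_sub_span; exact/PV].
move=> [cx x_span]; apply: (affine_hull_cube_mem _ P_convex P_nearest P_flat _ _ Px0 ox0 cx).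
move=> w c wc; rewrite -(wc _ Px0); move: x_span; apply: span_dotp_const => i iV.
by rewrite !wc //; apply/PV; exact: conv_nth.
Qed.
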